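(* Let $X_n$ and $Y_n$ be the number of centered arcs and the number of pairs of coupled arcs, respectively, of a uniformly random perfect matching of $[2n]$. Then for all $k,\ell\ge0$, $$\lim_{n\to\infty}\Pr(X_n=k)=\frac{e^{-1/2}}{2^kk!},\qquad \lim_{n\to\infty}\Pr(Y_n=\ell)=\frac{e^{-1/4}}{4^\ell\ell!},$$ i.e. $X_n$ and $Y_n$ converge to Poisson laws with parameters $1/2$ and $1/4$, and moreover $$\lim_{n\to\infty}\Pr(X_n=k,Y_n=\ell)=\frac{e^{-3/4}}{2^k4^\ell k!\ell!}.$$
   Context: $[2n]=\{1,\dots,2n\}$. For $A\subseteq[2n]$ let $\overline{A}=\{2n+1-i: i\in A\}$. An arc $\{i,j\}$ of a perfect matching $M$ of $[2n]$ is centered if $\overline{\{i,j\}}=\{i,j\}$; coupled if it is not centered but $\overline{\{i,j\}}\in M$, in which case $\{i,j\}$ and $\overline{\{i,j\}}$ form a pair of coupled arcs. *)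

From mathcomp Require Import all_boot all_fingroup.
From Stdlib Require Import Reals.
Set Implicit Arguments. Unset Strict Implicit. Unset Printing Implicit Defensive.

(* Ground set [2n] is represented 0-indexed by 'I_(n.*2); the reflection
   i |-> 2n+1-i becomes rev_ord (value 2n-1-i). *)

Definition is_pm (m : nat) (s : {perm 'I_m}) : bool :=
  [forall i, (s (s i) == i) && (s i != i)].

Definition pm (m : nat) : {set {perm 'I_m}} := [set s | is_pm s].

Definition arcs (m : nat) (s : {perm 'I_m}) : {set {set 'I_m}} :=
  [set [set i; s i] | i : 'I_m].

Definition bar (m : nat) (A : {set 'I_m}) : {set 'I_m} := [set rev_ord i | i in A].

Definition centered_arcs (m : nat) (s : {perm 'I_m}) : {set {set 'I_m}} :=
  [set A in arcs s | bar A == A].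

Definition coupled_arcs (m : nat) (s : {perm 'I_m}) : {set {set 'I_m}} :=
  [set A in arcs s | (bar A != A) && (bar A \in arcs s)].

Definition coupled_pairs (m : nat) (s : {perm 'I_m}) : {set {set {set 'I_m}}} :=
  [set [set A; bar A] | A in coupled_arcs s].

Definition Xstat (m : nat) (s : {perm 'I_m}) : nat := #|centered_arcs s|.
Definition Ystat (m : nat) (s : {perm 'I_m}) : nat := #|coupled_pairs s|.

Definition prob_pm (n : nat) (P : pred {perm 'I_(n.*2)}) : R :=
  (INR #|[set s in pm (n.*2) | P s]| / INR #|pm (n.*2)|)%R.

From Stdlib Require Import Reals Factorial Lra.
From mathcomp Require Import all_boot all_fingroup all_order all_algebra.
From mathcomp Require Import Rstruct zify ring lra.
Set Implicit Arguments. Unset Strict Implicit. Unset Printing Implicit Defensive.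

(* Write r for the reversal i |-> 2n+1-i.  In a matching s, the points on
   centered arcs are the i with s i = r i and those on coupled arcs are the i
   with s i <> r i and s (r i) = r (s i); there are 2 X and 4 Y of them.
   Conjugating s by a permutation commuting with r preserves X and Y and can
   move any point to any other, and the matchings in which the outermost points
   form a centered arc (or a pair of coupled arcs) are exactly the matchings of
   the inner points.  Double counting therefore gives the factorial moments
   exactly:  sum_s X^_a Y^_b = n^_(a+2b) (2(n-a-2b)-1)!!,  so that
   E[X^_a Y^_b] -> (1/2)^a (1/4)^b, the factorial moments of independent
   Poisson(1/2) and Poisson(1/4) laws.  Finally [X = k] is the finite
   alternating sum  sum_a (-1)^(a-k) C(a,k) X^_a / a!,  whose coefficients are
   absolutely summable; as the normalised moments lie in [0,1], Tannery's
   theorem passes the limit through these sums. *)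

(** * Points on centered and coupled arcs *)

Lemma card_involution_pairs (T : finType) (f : T -> T) (D : {set T}) :
  involutive f -> {in D, forall x, f x \in D} -> {in D, forall x, f x != x} ->
  #|D| = 2 * #|[set [set x; f x] | x in D]|.
Proof.
move=> fK fD f_neq; set P := [set [set x; f x] | x in D].
have pairE x y : y \in [set x; f x] -> [set y; f y] = [set x; f x].
  by case/set2P => ->; rewrite ?fK 1?setUC.
have partP : partition P D.
  apply/and3P; split.
  - apply/eqP/setP => y; apply/bigcupP/idP => [[_ /imsetP[x xD ->]]|yD].
      by case/set2P => ->; rewrite ?fD.
    by exists [set y; f y]; [apply: imset_f | apply: set21].
  - apply/trivIsetP => _ _ /imsetP[x _ ->] /imsetP[y _ ->] neq.
    apply/pred0P => z /=; apply/negP => /andP[/pairE zx /pairE zy].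
    by move/eqP: neq; rewrite -zx -zy.
  - by apply/imsetP => -[x _ /setP/(_ x)]; rewrite set21 inE.
rewrite (card_partition partP) mulnC -sum_nat_const.
by apply: eq_bigr => _ /imsetP[x xD ->]; rewrite cards2 eq_sym f_neq.
Qed.

Lemma pmP m (s : {perm 'I_m}) : reflect (involutive s /\ forall i, s i != i) (s \in pm m).
Proof.
rewrite inE; apply: (iffP forallP) => [h | [sK s_neq] i]; last by rewrite sK eqxx s_neq.
by split=> i; case/andP: (h i) => /eqP.
Qed.

Lemma rev_ord_neq n (i : 'I_(n.*2)) : rev_ord i != i.
Proof. by rewrite -val_eqE /=; have := ltn_ord i; lia. Qed.

Lemma rev_ord_eqE m (i j : 'I_m) : (rev_ord i == j) = (i == rev_ord j).
Proof. by apply/eqP/eqP => [<-|->]; rewrite rev_ordK. Qed.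

Lemma bar_set2 m (i j : 'I_m) : bar [set i; j] = [set rev_ord i; rev_ord j].
Proof. by rewrite /bar imsetU1 imset_set1. Qed.

Lemma barK m : involutive (@bar m).
Proof. by move=> A; rewrite /bar -imset_comp (eq_imset _ (@rev_ordK m)) imset_id. Qed.

Definition centered_pts m (s : {perm 'I_m}) : {set 'I_m} := [set i | s i == rev_ord i].

Definition coupled_pts m (s : {perm 'I_m}) : {set 'I_m} :=
  [set i | (s i != rev_ord i) && (s (rev_ord i) == rev_ord (s i))].

Section PointsOfArcs.
Variables (n : nat) (s : {perm 'I_(n.*2)}).
Hypothesis s_pm : s \in pm n.*2.
Local Notation r := (@rev_ord n.*2).

Let sK : involutive s. Proof. by case/pmP: s_pm. Qed.
Let s_neq i : s i != i. Proof. by case/pmP: s_pm. Qed.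

Lemma bar_arc_fixed i : (bar [set i; s i] == [set i; s i]) = (s i == r i).
Proof.
rewrite bar_set2; apply/eqP/eqP => [e | ->]; last by rewrite rev_ordK setUC.
have : r i \in [set i; s i] by rewrite -e set21.
by case/set2P => // ri_i; move: (rev_ord_neq i); rewrite ri_i eqxx.
Qed.

Lemma bar_arc_in_arcs i : ([set r i; r (s i)] \in arcs s) = (s (r i) == r (s i)).
Proof.
apply/imsetP/eqP => [[j _ e] | e]; last by exists (r i); rewrite ?e.
have : r (s i) != r i by rewrite (inj_eq rev_ord_inj) s_neq.
have : r i \in [set j; s j] by rewrite -e set21.
have : r (s i) \in [set j; s j] by rewrite -e set22.
by do 2 case/set2P=> ->; rewrite ?sK ?eqxx.
Qed.

Lemma centered_arcsE : centered_arcs s = [set [set i; s i] | i in centered_pts s].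
Proof.
apply/setP => A; rewrite inE; apply/andP/imsetP => [[/imsetP[i _ ->]] | [i]].
  by exists i; rewrite // inE -bar_arc_fixed.
by rewrite inE => ci ->; split; [apply/imsetP; exists i | rewrite bar_arc_fixed].
Qed.

Lemma coupled_arcsE : coupled_arcs s = [set [set i; s i] | i in coupled_pts s].
Proof.
apply/setP => A; rewrite inE; apply/andP/imsetP => [[/imsetP[i _ ->]] | [i]].
  by rewrite bar_arc_fixed bar_set2 bar_arc_in_arcs; exists i; rewrite // inE.
rewrite inE => /andP[ci cci] ->; split; first by apply/imsetP; exists i.
by rewrite bar_arc_fixed ci bar_set2 bar_arc_in_arcs.
Qed.

Lemma card_centered_pts : #|centered_pts s| = 2 * Xstat s.
Proof.
rewrite /Xstat centered_arcsE; apply: card_involution_pairs => // i.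
by rewrite !inE => /eqP si; rewrite sK si rev_ordK.
Qed.

Lemma card_coupled_pts : #|coupled_pts s| = 4 * Ystat s.
Proof.
have -> : #|coupled_pts s| = 2 * #|coupled_arcs s|.
  rewrite coupled_arcsE; apply: card_involution_pairs => // i.
  rewrite !inE sK => /andP[si /eqP e]; rewrite -e sK eqxx andbT.
  by apply: contra si => /eqP {1}->; rewrite sK.
rewrite /Ystat /coupled_pairs (@card_involution_pairs _ (@bar _)) ?mulnA //.
- exact: barK.
- by move=> A; rewrite !inE barK eq_sym => /and3P[-> -> ->].
- by move=> A; rewrite inE => /and3P[].
Qed.

End PointsOfArcs.

(** * Symmetries commuting with the reversal *)

Section RevCommuting.
Variable n : nat.
Local Notation m := n.*2.
Local Notation r := (@rev_ord n.*2).

Definition commutes_rev (g : {perm 'I_m}) := forall z, g (r z) = r (g z).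

Lemma pmJ (g s : {perm 'I_m}) : ((s ^ g)%g \in pm m) = (s \in pm m).
Proof.
suff pmJ1 t h : t \in pm m -> (t ^ h)%g \in pm m.
  by apply/idP/idP => [/(pmJ1 _ g^-1%g)|/pmJ1//]; rewrite conjgK.
case/pmP => tK t_neq; apply/pmP; split=> y; rewrite -(permKV h y) !permJ ?tK //.
by rewrite (inj_eq perm_inj).
Qed.

Definition rev_equivariant (P : {perm 'I_m} -> {set 'I_m}) :=
  forall g s x, commutes_rev g -> (g x \in P (s ^ g)%g) = (x \in P s).

Definition rev_invariant (F : {perm 'I_m} -> nat) :=
  forall g, commutes_rev g -> {in pm m, forall s, F (s ^ g)%g = F s}.

Lemma centered_pts_equivariant : rev_equivariant (@centered_pts m).
Proof. by move=> g s x gr; rewrite !inE permJ -gr (inj_eq perm_inj). Qed.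

Lemma coupled_pts_equivariant : rev_equivariant (@coupled_pts m).
Proof. by move=> g s x gr; rewrite !inE -gr !permJ -gr !(inj_eq perm_inj). Qed.

Lemma card_equivariant P g s :
  rev_equivariant P -> commutes_rev g -> #|P (s ^ g)%g| = #|P s|.
Proof.
move=> P_eq gr; have -> : P (s ^ g)%g = g @: P s.
  by apply/setP => y; rewrite -(permKV g y) mem_imset ?P_eq //; apply: perm_inj.
by rewrite card_imset //; apply: perm_inj.
Qed.

Lemma XstatJ g s : commutes_rev g -> s \in pm m -> Xstat (s ^ g)%g = Xstat s.
Proof.
move=> gr s_pm; apply/eqP; rewrite -(eqn_pmul2l (isT : 0 < 2)) -!card_centered_pts ?pmJ //.
by rewrite (card_equivariant _ centered_pts_equivariant gr).
Qed.

Lemma YstatJ g s : commutes_rev g -> s \in pm m -> Ystat (s ^ g)%g = Ystat s.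
Proof.
move=> gr s_pm; apply/eqP; rewrite -(eqn_pmul2l (isT : 0 < 4)) -!card_coupled_pts ?pmJ //.
by rewrite (card_equivariant _ coupled_pts_equivariant gr).
Qed.

Lemma stat_rev_invariant (G : nat -> nat -> nat) :
  rev_invariant (fun s => G (Xstat s) (Ystat s)).
Proof. by move=> g gr s s_pm; rewrite XstatJ ?YstatJ. Qed.

Lemma reindex_conj g (F : {perm 'I_m} -> nat) (P Q : pred {perm 'I_m}) :
  {in pm m, forall s, F (s ^ g)%g = F s} -> (forall s, P (s ^ g)%g = Q s) ->
  \sum_(s in pm m | Q s) F s = \sum_(s in pm m | P s) F s.
Proof.
move=> FJ PJ; rewrite [RHS](reindex (fun s => s ^ g)%g) /=.
  by apply: eq_big => [s | s /andP[s_pm _]]; rewrite ?pmJ ?PJ ?FJ.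
by apply: onW_bij; exists (fun s => s ^ g^-1)%g => s; [apply: conjgK | apply: conjgKV].
Qed.

Definition rev_swap (x y : 'I_m) : {perm 'I_m} :=
  if y == r x then tperm x y else (tperm x y * tperm (r x) (r y))%g.

Lemma rev_swapL x y : rev_swap x y x = y.
Proof.
rewrite /rev_swap; case: eqP => [_ | /eqP ne]; first by rewrite tpermL.
by rewrite permM tpermL tpermD ?rev_ord_neq // eq_sym.
Qed.

Lemma rev_swapD x y z :
  z != x -> z != y -> z != r x -> z != r y -> rev_swap x y z = z.
Proof.
by move=> zx zy zrx zry; rewrite /rev_swap; case: eqP => _; rewrite ?permM !tpermD // eq_sym.
Qed.

Lemma rev_swap_commutes x y : commutes_rev (rev_swap x y).
Proof.
move=> z; apply: val_inj; rewrite /rev_swap.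
have := ltn_ord x; have := ltn_ord y; have := ltn_ord z.
case: eqP => [-> | /eqP ne]; rewrite ?permM !permE /= -?val_eqE /= ?(fun_if val) /=.
  by repeat case: ifP; lia.
move: ne; rewrite -?val_eqE /=.
by repeat case: ifP; lia.
Qed.

Lemma sum_card_equivariant P (F : {perm 'I_m} -> nat) (i0 : 'I_m) :
  rev_equivariant P -> rev_invariant F ->
  \sum_(s in pm m) #|P s| * F s = m * \sum_(s in pm m | i0 \in P s) F s.
Proof.
move=> P_eq F_inv.
under eq_bigr => s _ do rewrite -sum1_card big_distrl /= big_mkcond /=.
rewrite exchange_big /= -[X in _ = X * _](card_ord m) -sum_nat_const.
apply: eq_bigr => i _; rewrite -big_mkcondr /=.
under eq_bigr => s _ do rewrite mul1n.
have g_i : (rev_swap i i0)^-1%g i0 = i by apply: (canLR (permK _)); rewrite rev_swapL.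
apply: (reindex_conj (F_inv _ (rev_swap_commutes i i0))) => s.
by rewrite -{1}(permKV (rev_swap i i0) i0) P_eq ?g_i //; apply: rev_swap_commutes.
Qed.

End RevCommuting.

(** * Matchings with prescribed outer arcs *)

(* The matchings of 'I_M that agree with o outside the middle block [c, c + m)
   are the matchings of 'I_m, shifted by c. *)
Section Extension.
Variables (m c M : nat).
Hypothesis mcM : m + c.*2 = M.

Definition inside (x : 'I_M) := c <= x < c + m.

Lemma inner_proof (j : 'I_m) : j + c < M.
Proof. have := ltn_ord j; lia. Qed.

Definition inner (j : 'I_m) : 'I_M := Ordinal (inner_proof j).

Lemma inner_inj : injective inner.
Proof. by move=> j k /(congr1 val) /= /addIn /val_inj. Qed.

Lemma inside_inner j : inside (inner j).
Proof. by rewrite /inside /=; have := ltn_ord j; lia. Qed.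

Lemma insideP x : inside x -> {j | x = inner j}.
Proof.
rewrite /inside => xc; have xm : x - c < m by lia.
by exists (Ordinal xm); apply: val_inj => /=; lia.
Qed.

Lemma inner_rev j : inner (rev_ord j) = rev_ord (inner j).
Proof. by apply: val_inj => /=; have := ltn_ord j; lia. Qed.

Lemma inside_rev x : inside (rev_ord x) = inside x.
Proof. by rewrite /inside /=; have := ltn_ord x; lia. Qed.

Lemma card_outside : #|[set x | ~~ inside x]| = c.*2.
Proof.
have -> : [set x | ~~ inside x] = ~: (inner @: [set: 'I_m]).
  apply/setP => x; rewrite !inE; congr (~~ _).
  apply/idP/imsetP => [/insideP[j ->] | [j _ ->]]; [by exists j | exact: inside_inner].
by rewrite cardsCs setCK (card_imset _ inner_inj) cardsT !card_ord; lia.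
Qed.

Variable o : {perm 'I_M}.
Hypothesis o_out : forall x, ~~ inside x -> ~~ inside (o x).
Hypothesis oK : forall x, ~~ inside x -> o (o x) = x.
Hypothesis o_neq : forall x, ~~ inside x -> o x != x.

Definition extendf (t : {perm 'I_m}) (x : 'I_M) : 'I_M :=
  if [pick j | inner j == x] is Some j then inner (t j) else o x.

Lemma extendf_inner t j : extendf t (inner j) = inner (t j).
Proof.
by rewrite /extendf; case: pickP => [k /eqP /inner_inj -> // | /(_ j)]; rewrite eqxx.
Qed.

Lemma extendf_out t x : ~~ inside x -> extendf t x = o x.
Proof.
rewrite /extendf => x_out; case: pickP => // j /eqP ej.
by move: x_out; rewrite -ej inside_inner.
Qed.

Lemma extendf_inj t : injective (extendf t).
Proof.
move=> x y; case: (boolP (inside x)) => [/insideP[j ->] | x_out];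
  case: (boolP (inside y)) => [/insideP[k ->] | y_out];
  rewrite ?extendf_inner ?extendf_out //.
- by move/inner_inj/perm_inj ->.
- by move=> e; move: (o_out y_out); rewrite -e inside_inner.
- by move=> e; move: (o_out x_out); rewrite e inside_inner.
- exact: perm_inj.
Qed.

Definition extend t : {perm 'I_M} := perm (@extendf_inj t).

Lemma extend_inner t j : extend t (inner j) = inner (t j).
Proof. by rewrite permE extendf_inner. Qed.

Lemma extend_out t x : ~~ inside x -> extend t x = o x.
Proof. by move=> x_out; rewrite permE extendf_out. Qed.

Lemma extend_pm t : t \in pm m -> extend t \in pm M.
Proof.
case/pmP => tK t_neq; apply/pmP; split=> x;
  case: (boolP (inside x)) => [/insideP[j ->] | x_out].
- by rewrite !extend_inner tK.
- by rewrite !extend_out ?oK ?o_out.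
- by rewrite extend_inner (inj_eq inner_inj).
- by rewrite extend_out ?o_neq.
Qed.

Lemma extend_inj : injective extend.
Proof.
by move=> t1 t2 e; apply/permP => j; apply: inner_inj; rewrite -!extend_inner e.
Qed.

Lemma extend_onto s : s \in pm M -> (forall x, ~~ inside x -> s x = o x) ->
  exists2 t, t \in pm m & s = extend t.
Proof.
case/pmP => sK s_neq s_out.
have s_in j : inside (s (inner j)).
  apply: contraT => out; have := o_out out.
  by rewrite -s_out // sK inside_inner.
pose tf j := sval (insideP (s_in j)).
have tfE j : inner (tf j) = s (inner j) by rewrite /tf; case: insideP.
have tf_inj : injective tf.
  by move=> j k e; apply/inner_inj/(@perm_inj _ s); rewrite -!tfE e.
pose t := perm tf_inj.
have tE j : inner (t j) = s (inner j) by rewrite permE tfE.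
exists t.
  apply/pmP; split=> j; first by apply: inner_inj; rewrite !tE sK.
  by rewrite -(inj_eq inner_inj) tE s_neq.
apply/permP => x; case: (boolP (inside x)) => [/insideP[j ->] | x_out].
  by rewrite extend_inner tE.
by rewrite extend_out // s_out.
Qed.

Lemma sum_extend (F : {perm 'I_M} -> nat) (Q : pred {perm 'I_M}) :
  {in pm M, forall s, Q s = [forall x, ~~ inside x ==> (s x == o x)]} ->
  \sum_(s in pm M | Q s) F s = \sum_(t in pm m) F (extend t).
Proof.
move=> QE; rewrite -(big_imset _ (in2W extend_inj)) /=.
apply: eq_bigl => s; apply/andP/imsetP => [[s_pm] | [t t_pm ->]].
  rewrite QE // => /forallP s_out.
  have [x x_out | t t_pm ->] := extend_onto s_pm; last by exists t.
  by apply/eqP; move: (s_out x); rewrite x_out.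
split; first exact: extend_pm.
by rewrite QE ?extend_pm //; apply/forallP => x; apply/implyP => x_out; rewrite extend_out.
Qed.

Lemma card_split_inside (A : {set 'I_M}) (B : {set 'I_m}) (K : {set 'I_M}) :
  (forall j, (inner j \in A) = (j \in B)) ->
  (forall x, ~~ inside x -> (x \in A) = (x \in K)) ->
  K \subset [set x | ~~ inside x] -> #|A| = #|B| + #|K|.
Proof.
move=> AB AK K_out; rewrite -(cardsID [set x | inside x] A); congr (_ + _).
  have -> : A :&: [set x | inside x] = inner @: B.
    apply/setP => x; rewrite !inE; case: (boolP (inside x)) => [/insideP[j ->] | x_out].
      by rewrite mem_imset ?AB ?andbT //; apply: inner_inj.
    rewrite andbF; apply/esym/imsetP => -[j _ ej]; by move: x_out; rewrite ej inside_inner.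
  by rewrite card_imset //; apply: inner_inj.
apply: eq_card => x; rewrite !inE; case: (boolP (inside x)) => x_in /=; last by rewrite AK.
by apply/esym/negbTE; apply: contraL x_in => /(subsetP K_out); rewrite inE.
Qed.

Lemma card_centered_pts_extend t : #|centered_pts (extend t)| =
  #|centered_pts t| + #|[set x | ~~ inside x & o x == rev_ord x]|.
Proof.
apply: card_split_inside => [j | x x_out | ].
- by rewrite !inE extend_inner -inner_rev (inj_eq inner_inj).
- by rewrite !inE x_out extend_out.
- by apply/subsetP => x; rewrite !inE => /andP[].
Qed.

Lemma card_coupled_pts_extend t : #|coupled_pts (extend t)| = #|coupled_pts t| +
  #|[set x | ~~ inside x & (o x != rev_ord x) && (o (rev_ord x) == rev_ord (o x))]|.
Proof.
apply: card_split_inside => [j | x x_out | ].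
- by rewrite !inE -inner_rev !extend_inner -!inner_rev !(inj_eq inner_inj).
- by rewrite !inE x_out !extend_out // inside_rev.
- by apply/subsetP => x; rewrite !inE => /andP[].
Qed.

End Extension.

(** * Factorial moments *)

Definition fmoment n a b := \sum_(s in pm n.*2) Xstat s ^_ a * Ystat s ^_ b.

Section CenteredRecursion.
Variable n : nat.
Local Notation M := n.+1.*2.
Local Notation r := (@rev_ord M).
Local Notation x0 := (ord0 : 'I_M).

Let mcM : n.*2 + 1.*2 = M. Proof. lia. Qed.
Local Notation inside := (@inside n.*2 1 M).

Definition centered_outer : {perm 'I_M} := tperm x0 (r x0).

Lemma outside1 x : ~~ inside x = (x == x0) || (x == r x0).
Proof. by rewrite /inside -!val_eqE /=; have := ltn_ord x; lia. Qed.

Lemma centered_outerE x : ~~ inside x -> centered_outer x = r x.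
Proof. by rewrite outside1 => /orP[] /eqP ->; rewrite ?tpermL ?tpermR ?rev_ordK. Qed.

Lemma centered_outer_out x : ~~ inside x -> ~~ inside (centered_outer x).
Proof. by move=> x_out; rewrite centered_outerE // inside_rev. Qed.

Lemma centered_outerK x : ~~ inside x -> centered_outer (centered_outer x) = x.
Proof. by move=> x_out; rewrite !centered_outerE ?rev_ordK ?inside_rev. Qed.

Lemma centered_outer_neq x : ~~ inside x -> centered_outer x != x.
Proof. by move=> x_out; rewrite centered_outerE ?rev_ord_neq. Qed.

Local Notation extend1 := (extend mcM centered_outer_out).

Lemma extend1_pm t : t \in pm n.*2 -> extend1 t \in pm M.
Proof. exact: (extend_pm mcM centered_outer_out centered_outerK centered_outer_neq). Qed.

Lemma sum_centered_x0 (F : {perm 'I_M} -> nat) :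
  \sum_(s in pm M | s x0 == r x0) F s = \sum_(t in pm n.*2) F (extend1 t).
Proof.
apply: (sum_extend mcM centered_outer_out centered_outerK centered_outer_neq) => s /pmP[sK _].
apply/eqP/forallP => [s0 x | /(_ x0)]; last by rewrite outside1 eqxx tpermL => /eqP.
apply/implyP; rewrite outside1 => /orP[] /eqP ->; first by rewrite s0 tpermL.
by rewrite tpermR -s0 sK.
Qed.

Lemma Xstat_extend1 t : t \in pm n.*2 -> Xstat (extend1 t) = (Xstat t).+1.
Proof.
move=> t_pm; apply/eqP; rewrite -(eqn_pmul2l (isT : 0 < 2)) -card_centered_pts ?extend1_pm //.
rewrite card_centered_pts_extend card_centered_pts //.
have -> : [set x | ~~ inside x & centered_outer x == r x] = [set x | ~~ inside x].
  apply/setP => x; rewrite !inE; case: (boolP (inside x)) => //=.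
  by move/centered_outerE ->; rewrite eqxx.
by rewrite (card_outside mcM) mulnS addnC.
Qed.

Lemma Ystat_extend1 t : t \in pm n.*2 -> Ystat (extend1 t) = Ystat t.
Proof.
move=> t_pm; apply/eqP; rewrite -(eqn_pmul2l (isT : 0 < 4)) -card_coupled_pts ?extend1_pm //.
rewrite card_coupled_pts_extend card_coupled_pts // -[X in _ == X]addn0; apply/eqP; congr (_ + _).
apply/eqP; rewrite cards_eq0; apply/eqP/setP => x; rewrite !inE.
by case: (boolP (inside x)) => //= /centered_outerE ->; rewrite eqxx.
Qed.

Lemma card_pmS : #|pm M| = n.*2.+1 * #|pm n.*2|.
Proof.
rewrite -sum1_card (partition_big (fun s : {perm 'I_M} => s x0) xpredT) //=.
rewrite (bigD1 x0) //= big1 ?add0n => [|s /andP[/pmP[_ s_neq] /eqP s0]]; last first.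
  by move: (s_neq x0); rewrite s0 eqxx.
have s0_conj j : j != x0 ->
    \sum_(s in pm M | s x0 == j) 1 = \sum_(s in pm M | s x0 == r x0) 1.
  move=> j_x0; apply: (reindex_conj (g := tperm j (r x0))) => // s.
  rewrite conjgE !permM tpermV tpermD ?rev_ord_neq //.
  by rewrite (can2_eq (tpermK _ _) (tpermK _ _)) tpermR.
by rewrite (eq_bigr _ s0_conj) sum_nat_const cardC1 card_ord sum_centered_x0 sum1_card.
Qed.

Lemma fmomentS a b : fmoment n.+1 a.+1 b = n.+1 * fmoment n a b.
Proof.
apply/eqP; rewrite -(eqn_pmul2l (isT : 0 < 2)); apply/eqP.
rewrite /fmoment big_distrr /= mulnA mul2n.
under eq_bigr => s s_pm do rewrite ffactnS !mulnA -card_centered_pts // -mulnA.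
have /= -> := sum_card_equivariant x0 (@centered_pts_equivariant _)
  (stat_rev_invariant (fun x y => x.-1 ^_ a * y ^_ b)).
under eq_bigl => s do rewrite [_ \in centered_pts _]inE.
by rewrite sum_centered_x0; congr (_ * _); apply: eq_bigr => t t_pm;
  rewrite Xstat_extend1 ?Ystat_extend1.
Qed.

End CenteredRecursion.

Section CoupledRecursion.
Variable n : nat.
Local Notation M := n.+2.*2.
Local Notation r := (@rev_ord M).
Local Notation y0 := (ord0 : 'I_M).
Local Notation y1 := (@Ordinal M 1 isT).

Let mcM : n.*2 + 2.*2 = M. Proof. lia. Qed.
Local Notation inside := (@inside n.*2 2 M).

Definition coupled_outer : {perm 'I_M} := (tperm y0 y1 * tperm (r y0) (r y1))%g.

Lemma outside2 x : ~~ inside x = [|| x == y0, x == y1, x == r y1 | x == r y0].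
Proof. by rewrite /inside -!val_eqE /=; have := ltn_ord x; lia. Qed.

Lemma coupled_outerE :
  ((coupled_outer y0 = y1) * (coupled_outer y1 = y0) *
   (coupled_outer (r y0) = r y1) * (coupled_outer (r y1) = r y0))%type.
Proof.
by do !split; apply: val_inj; rewrite permM !permE /= -?val_eqE /=; repeat case: ifP => /=; lia.
Qed.

Ltac outside_cases x_out :=
  move: x_out; rewrite outside2 => /or4P[] /eqP ->; rewrite ?coupled_outerE.

Lemma coupled_outer_out x : ~~ inside x -> ~~ inside (coupled_outer x).
Proof. by move=> x_out; outside_cases x_out; rewrite outside2 eqxx ?orbT. Qed.

Lemma coupled_outerK x : ~~ inside x -> coupled_outer (coupled_outer x) = x.
Proof. by move=> x_out; outside_cases x_out. Qed.

Lemma coupled_outer_neq x : ~~ inside x -> coupled_outer x != x.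
Proof. by move=> x_out; outside_cases x_out; rewrite -val_eqE /=; lia. Qed.

Local Notation extend2 := (extend mcM coupled_outer_out).

Lemma extend2_pm t : t \in pm n.*2 -> extend2 t \in pm M.
Proof. exact: (extend_pm mcM coupled_outer_out coupled_outerK coupled_outer_neq). Qed.

Lemma sum_coupled_y0 (F : {perm 'I_M} -> nat) :
  \sum_(s in pm M | (s y0 == y1) && (s (r y0) == r y1)) F s =
  \sum_(t in pm n.*2) F (extend2 t).
Proof.
apply: (sum_extend mcM coupled_outer_out coupled_outerK coupled_outer_neq).
move=> s /pmP[sK _]; apply/andP/forallP => [[/eqP s0 /eqP s1] x | s_out]; last first.
  by move: (s_out y0) (s_out (r y0)); rewrite !outside2 !eqxx ?orbT /= !coupled_outerE.
apply/implyP; rewrite outside2 => /or4P[] /eqP ->; rewrite coupled_outerE.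
- by rewrite s0.
- by rewrite -s0 sK.
- by rewrite -s1 sK.
- by rewrite s1.
Qed.

Lemma Xstat_extend2 t : t \in pm n.*2 -> Xstat (extend2 t) = Xstat t.
Proof.
move=> t_pm; apply/eqP; rewrite -(eqn_pmul2l (isT : 0 < 2)) -card_centered_pts ?extend2_pm //.
rewrite card_centered_pts_extend card_centered_pts // -[X in _ == X]addn0; apply/eqP.
congr (_ + _); apply/eqP; rewrite cards_eq0; apply/eqP/setP => x; rewrite !inE.
case: (boolP (inside x)) => //= x_out; apply/negbTE.
by outside_cases x_out; rewrite -val_eqE /=; lia.
Qed.

Lemma Ystat_extend2 t : t \in pm n.*2 -> Ystat (extend2 t) = (Ystat t).+1.
Proof.
move=> t_pm; apply/eqP; rewrite -(eqn_pmul2l (isT : 0 < 4)) -card_coupled_pts ?extend2_pm //.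
rewrite card_coupled_pts_extend card_coupled_pts //.
have -> : [set x | ~~ inside x & (coupled_outer x != r x) &&
    (coupled_outer (r x) == r (coupled_outer x))] = [set x | ~~ inside x].
  apply/setP => x; rewrite !inE; case: (boolP (inside x)) => //= x_out.
  by outside_cases x_out; rewrite ?rev_ordK ?coupled_outerE eqxx andbT -val_eqE /=; lia.
by rewrite (card_outside mcM) mulnS addnC.
Qed.

Section InvariantSums.
Variable F : {perm 'I_M} -> nat.
Hypothesis F_inv : rev_invariant F.

Lemma sum_coupled_y0_conj j : j != y0 -> j != r y0 ->
  \sum_(s in pm M | (s y0 == j) && (s (r y0) == r j)) F s =
  \sum_(s in pm M | (s y0 == y1) && (s (r y0) == r y1)) F s.
Proof.
move=> j_y0 j_ry0; set g := rev_swap j y1.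
have g_y0 : g y0 = y0.
  by apply: rev_swapD; rewrite // 1?eq_sym // rev_ord_eqE.
have g_ry0 : g (r y0) = r y0 by rewrite rev_swap_commutes g_y0.
have gV_fix x : g x = x -> g^-1%g x = x by move=> gx; rewrite -{1}gx permK.
have g_j : g j = y1 by apply: rev_swapL.
have gr : commutes_rev g by apply: rev_swap_commutes.
apply: (reindex_conj (F_inv gr)) => s.
by rewrite conjgE !permM gV_fix // gV_fix // -g_j -gr !(inj_eq perm_inj).
Qed.

Lemma sum_coupled_pts_y0 :
  \sum_(s in pm M | y0 \in coupled_pts s) F s =
  (M - 2) * \sum_(s in pm M | (s y0 == y1) && (s (r y0) == r y1)) F s.
Proof.
rewrite (partition_big (fun s : {perm 'I_M} => s y0) (mem (~: [set y0; r y0]))) => [|s]; last first.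
  by case/andP=> /pmP[_ s_neq]; rewrite !inE => /andP[s_rev _]; rewrite negb_or s_neq.
have -> : M - 2 = #|~: [set y0; r y0]|.
  by rewrite cardsCs setCK cards2 eq_sym rev_ord_neq card_ord.
rewrite -sum_nat_const; apply: eq_bigr => j; rewrite !inE negb_or => /andP[j_y0 j_ry0].
rewrite -(sum_coupled_y0_conj j_y0 j_ry0); apply: eq_bigl => s.
rewrite !inE -andbA; case: (s y0 =P j) => [-> | _]; rewrite ?andbF //.
by rewrite j_ry0 andbT.
Qed.

End InvariantSums.

Lemma fmomentSS a b : fmoment n.+2 a b.+1 = n.+2 * n.+1 * fmoment n a b.
Proof.
apply/eqP; rewrite -(eqn_pmul2l (isT : 0 < 4)); apply/eqP.
rewrite /fmoment big_distrr /=.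
under eq_bigr => s s_pm do
  rewrite ffactnS [X in 4 * X]mulnCA mulnA -card_coupled_pts //.
pose F_inv := @stat_rev_invariant n.+2 (fun x y => x ^_ a * y.-1 ^_ b).
have /= -> := sum_card_equivariant y0 (@coupled_pts_equivariant _) F_inv.
have /= -> := sum_coupled_pts_y0 F_inv.
rewrite sum_coupled_y0 !mulnA; congr (_ * _); first by rewrite -!mul2n; lia.
by apply: eq_bigr => t t_pm; rewrite Xstat_extend2 ?Ystat_extend2.
Qed.

End CoupledRecursion.

(* (2n-1)!! *)
Fixpoint dfact n := if n is n'.+1 then n'.*2.+1 * dfact n' else 1.

Lemma card_pm n : #|pm n.*2| = dfact n.
Proof.
elim: n => [|n IH]; last by rewrite card_pmS IH.
have -> : pm 0 = [set: {perm 'I_0}] by apply/setP => s; rewrite !inE; apply/forallP => -[].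
by rewrite cardsT card_Sn.
Qed.

Lemma Xstat_le n (s : {perm 'I_n.*2}) : s \in pm n.*2 -> Xstat s <= n.
Proof.
by move=> s_pm; have := max_card (mem (centered_pts s)); rewrite card_centered_pts // card_ord; lia.
Qed.

Lemma Ystat_le n (s : {perm 'I_n.*2}) : s \in pm n.*2 -> (Ystat s).*2 <= n.
Proof.
by move=> s_pm; have := max_card (mem (coupled_pts s)); rewrite card_coupled_pts // card_ord; lia.
Qed.

Lemma fmomentE n a b : fmoment n a b = n ^_ (a + b.*2) * dfact (n - (a + b.*2)).
Proof.
elim: a n => [|a IHa] n; last first.
  case: n => [|n]; last by rewrite fmomentS IHa addSn ffactSS subSS mulnA.
  rewrite ffact_small // mul0n; apply: big1 => s s_pm.
  by move: (Xstat_le s_pm); rewrite leqn0 => /eqP ->; rewrite ffact0n.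
elim: b n => [|b IHb] n.
  by rewrite ffactn0 subn0 mul1n -card_pm -sum1_card; apply: eq_bigr => s _; rewrite !ffactn0.
case: n => [|[|n]]; last by rewrite fmomentSS IHb !add0n doubleS !ffactSS !subSS !mulnA.
all: rewrite ffact_small // mul0n; apply: big1 => s s_pm.
all: have Y0 : Ystat s = 0 by have := Ystat_le s_pm; lia.
all: by rewrite Y0 ffact0n muln0.
Qed.

(** * Convergence and Tannery's theorem *)

Import Order.TTheory GRing.Theory Num.Theory.
Local Open Scope ring_scope.
(* Stdlib binds [R_scope] to [R]; read terms of type [R] in [ring_scope] instead. *)
Bind Scope ring_scope with R.

Definition cvg_to (u : nat -> R) (l : R) :=
  forall e : R, 0 < e -> exists N, forall n, (N <= n)%N -> `|u n - l| < e.

Lemma cvg_toE u l : cvg_to u l <-> Un_cv u l.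
Proof.
split=> cvg_u e /RltP e_gt0; have [N uN] := cvg_u e e_gt0; exists N => n /ssrnat.leP Nn.
  by rewrite RdistE; apply/RltP; apply: uN.
by have := uN n Nn; rewrite RdistE => /RltP.
Qed.

Lemma cvg_toD u v l1 l2 : cvg_to u l1 -> cvg_to v l2 -> cvg_to (fun n => u n + v n) (l1 + l2).
Proof. by move=> /cvg_toE cu /cvg_toE cv; apply/cvg_toE; apply: CV_plus. Qed.

Lemma cvg_toM u v l1 l2 : cvg_to u l1 -> cvg_to v l2 -> cvg_to (fun n => u n * v n) (l1 * l2).
Proof. by move=> /cvg_toE cu /cvg_toE cv; apply/cvg_toE; apply: CV_mult. Qed.

Lemma cvg_to_cst c : cvg_to (fun _ => c) c.
Proof. by move=> e e_gt0; exists 0%N => n _; rewrite subrr normr0. Qed.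

Lemma eq_cvg_to u v l : u =1 v -> cvg_to u l -> cvg_to v l.
Proof. by move=> uv cu e /cu[N uN]; exists N => n /uN; rewrite uv. Qed.

Lemma cvg_toZ c u l : cvg_to u l -> cvg_to (fun n => c * u n) (c * l).
Proof. exact: cvg_toM (cvg_to_cst c). Qed.

Lemma cvg_to_shift u l : cvg_to (fun n => u n.+1) l -> cvg_to u l.
Proof. by move=> cu e /cu[N uN]; exists N.+1 => -[|n] // /uN. Qed.

Lemma cvg_to_sum K (u : nat -> nat -> R) (v : nat -> R) :
  (forall j, cvg_to (u^~ j) (v j)) ->
  cvg_to (fun n => \sum_(0 <= j < K) u n j) (\sum_(0 <= j < K) v j).
Proof.
move=> cu; elim: K => [|K IH].
  by rewrite big_geq //; apply: eq_cvg_to (cvg_to_cst 0) => n; rewrite big_geq.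
rewrite big_nat_recr //=; apply: eq_cvg_to (cvg_toD IH (cu K)) => n.
by rewrite big_nat_recr.
Qed.

Lemma nondecreasing_le_lim (u : nat -> R) l :
  (forall n, u n <= u n.+1) -> cvg_to u l -> forall n, u n <= l.
Proof.
move=> u_incr cu n; rewrite leNgt; apply/negP => l_lt.
have gap : 0 < u n - l by lra.
have [N uN] := cu _ gap.
have u_mono i : u n <= u (n + i)%N.
  by elim: i => [|i IH]; rewrite ?addn0 // addnS (le_trans IH).
have := uN (n + N)%N (leq_addl _ _); have := u_mono N.
rewrite ltr_norml => ? /andP[_ ?]; lra.
Qed.

Definition psum (F : nat -> R) N := \sum_(0 <= j < N.+1) F j.

Lemma psumS F N : psum F N.+1 = psum F N + F N.+1.
Proof. by rewrite /psum big_nat_recr. Qed.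

Lemma psumZ c F N : psum (fun j => c * F j) N = c * psum F N.
Proof. by rewrite /psum mulr_sumr. Qed.

Lemma cvg_to_psumZ c F l : cvg_to (psum F) l -> cvg_to (psum (fun j => c * F j)) (c * l).
Proof. by move=> /(cvg_toZ c); apply: eq_cvg_to => N; rewrite psumZ. Qed.

Lemma psum_le_lim F l : (forall j, 0 <= F j) -> cvg_to (psum F) l -> forall N, psum F N <= l.
Proof. by move=> F_ge0; apply: nondecreasing_le_lim => N; rewrite psumS lerDl. Qed.

Lemma psum_cat F K n : (K <= n)%N -> psum F n = psum F K + \sum_(K.+1 <= j < n.+1) F j.
Proof. by move=> Kn; rewrite /psum (big_cat_nat _ (n := K.+1)). Qed.

Lemma tannery (u : nat -> nat -> R) (v M : nat -> R) (L SM : R) :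
  (forall n j, `|u n j| <= M j) -> cvg_to (psum M) SM ->
  (forall j, cvg_to (u^~ j) (v j)) -> cvg_to (psum v) L ->
  cvg_to (fun n => psum (u n) n) L.
Proof.
move=> uM cM cu cv e e_gt0.
have M_ge0 j : 0 <= M j by apply: le_trans (uM 0%N j).
have e3 : 0 < e / 3 by lra.
have [K1 MK1] := cM _ e3.
have [K2 vK2] := cv _ e3.
pose K := maxn K1 K2.
have cu_head : cvg_to (fun n => \sum_(0 <= j < K.+1) (u n j - v j)) 0.
  have := @cvg_to_sum K.+1 (fun n j => u n j - v j) (fun=> 0); rewrite big1_eq; apply.
  by move=> j e' /(cu j)[N uN]; exists N => n /uN; rewrite subr0.
have [N0 headN0] := cu_head _ e3.
exists (maxn N0 K) => n; rewrite geq_max => /andP[N0n Kn].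
have head := headN0 n N0n; rewrite subr0 sumrB in head.
have tail : `|\sum_(K.+1 <= j < n.+1) u n j| <= SM - psum M K.
  apply: le_trans (ler_norm_sum _ _ _) _; apply: le_trans (_ : _ <= \sum_(K.+1 <= j < n.+1) M j) _.
    by apply: ler_sum => j _; apply: uM.
  by have := psum_le_lim M_ge0 cM n; rewrite (psum_cat _ Kn); lra.
have := MK1 K (leq_maxl _ _); rewrite ltr_norml => /andP[MK _].
have VK := vK2 K (leq_maxr _ _).
move: head tail VK MK; rewrite (psum_cat _ Kn) /psum; set T := \sum_(K.+1 <= j < n.+1) _.
set U := \sum_(0 <= j < K.+1) u n j; set V := \sum_(0 <= j < K.+1) v j => head tail VK MK.
have -> : U + T - L = (U - V) + T + (V - L) by ring.
apply: le_lt_trans (ler_normD _ _) _; have := ler_normD (U - V) T.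
lra.
Qed.

Lemma dfact_gt0 n : (0 < dfact n)%N.
Proof. by elim: n => //= n IH; rewrite muln_gt0 IH. Qed.

(* [fmoment n a b / #|pm n.*2|] for m = a + 2b, by [fmomentE] and [card_pm]. *)
Definition fmoment_ratio n m : R := (n ^_ m * dfact (n - m))%:R / (dfact n)%:R.

Lemma fmoment_ratio_n0 n : fmoment_ratio n 0 = 1.
Proof. by rewrite /fmoment_ratio ffactn0 subn0 mul1n divff // pnatr_eq0 -lt0n dfact_gt0. Qed.

Lemma fmoment_ratio_0S m : fmoment_ratio 0 m.+1 = 0.
Proof. by rewrite /fmoment_ratio ffact0n mul0n mul0r. Qed.

Lemma fmoment_ratioSS n m :
  fmoment_ratio n.+1 m.+1 = n.+1%:R / n.*2.+1%:R * fmoment_ratio n m.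
Proof.
rewrite /fmoment_ratio ffactSS subSS /= !natrM.
have d_gt0 : 0 < (dfact n)%:R :> R by rewrite ltr0n dfact_gt0.
have n_ge0 : 0 <= n.*2%:R :> R by [].
by field; rewrite (lt0r_neq0 d_gt0) lt0r_neq0 //; lra.
Qed.

Lemma fmoment_ratio_ge0 n m : 0 <= fmoment_ratio n m.
Proof. by rewrite /fmoment_ratio divr_ge0. Qed.

Lemma fmoment_ratio_le1 n m : fmoment_ratio n m <= 1.
Proof.
elim: m n => [|m IH] [|n]; rewrite ?fmoment_ratio_n0 ?fmoment_ratio_0S ?ler01 //.
rewrite fmoment_ratioSS; apply: mulr_ile1; rewrite ?divr_ge0 ?fmoment_ratio_ge0 //.
by rewrite ler_pdivrMr ?ltr0n // mul1r ler_nat; lia.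
Qed.

Lemma cvg_to_half : cvg_to (fun n => n.+1%:R / n.*2.+1%:R) 2^-1.
Proof.
move=> e e_gt0; exists (Num.Def.archi_bound e^-1) => n bn.
have einv_ge0 : 0 <= e^-1 by rewrite invr_ge0 ltW.
have := archi_boundP einv_ge0; rewrite -(ler_nat R) in bn => e_lt.
set t : R := n.*2.+1%:R; have tE : t = 2 * n%:R + 1 by rewrite /t -addn1 -mul2n natrD natrM.
have n_ge0 : 0 <= n%:R :> R by [].
have -> : n.+1%:R / t - 2^-1 = (2 * t)^-1 by rewrite -addn1 natrD tE; field; lra.
rewrite ger0_norm ?invr_ge0 ?tE; last lra.
rewrite -[e]invrK ltf_pV2 ?posrE ?invr_gt0 //; lra.
Qed.

Lemma cvg_to_fmoment_ratio m : cvg_to (fmoment_ratio^~ m) (2^-1 ^+ m).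
Proof.
elim: m => [|m IH].
  by apply: eq_cvg_to (cvg_to_cst 1) => n; rewrite fmoment_ratio_n0.
apply: cvg_to_shift; rewrite exprS.
by apply: eq_cvg_to (cvg_toM cvg_to_half IH) => n; rewrite fmoment_ratioSS.
Qed.

Lemma cvg_to_exp z : cvg_to (psum (fun j => (j`!%:R)^-1 * z ^+ j)) (exp z).
Proof.
apply/cvg_toE => e /(proj2_sig (exist_exp z))[N expN]; exists N => n /expN.
rewrite sum_f_R0E /psum.
by under eq_bigr => j _ do rewrite INRE factE RinvE RpowE RmultE.
Qed.

Definition shiftr_seq k (w : nat -> R) a := if (k <= a)%N then w (a - k)%N else 0.

Lemma psum_shiftr k w d : psum (shiftr_seq k w) (k + d) = psum w d.
Proof.
elim: d => [|d IH]; last by rewrite addnS !psumS IH /shiftr_seq -addnS leq_addr addKn.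
rewrite addn0 /psum big_nat_recr //= /shiftr_seq leqnn subnn big_nat1 big_nat_cond big1 ?add0r //.
by move=> a /andP[/andP[_ ak] _]; rewrite leqNgt ak.
Qed.

Lemma cvg_to_psum_shiftr k w l : cvg_to (psum w) l -> cvg_to (psum (shiftr_seq k w)) l.
Proof.
move=> cw e /cw[N wN]; exists (N + k)%N => n Nn.
by rewrite -(subnKC (leq_trans (leq_addl N k) Nn)) psum_shiftr; apply: wN; lia.
Qed.

(** * From factorial moments to probabilities *)

Definition expands (c : nat -> R) (P : pred nat) :=
  forall X N, (X <= N)%N -> \sum_(0 <= a < N.+1) c a * (X ^_ a)%:R = (P X)%:R.

Definition indicator_coef k : nat -> R :=
  shiftr_seq k (fun j => (-1) ^+ j / (k`!%:R * j`!%:R)).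

Definition unit_coef a : R := (a == 0)%N%:R.

Lemma ffactnD n k j : (n ^_ (k + j) = n ^_ k * (n - k) ^_ j)%N.
Proof.
by elim: j => [|j IH]; rewrite ?addn0 ?muln1 // addnS !ffactnSr IH -mulnA subnDA.
Qed.

Lemma sum_sign_binomial d :
  \sum_(0 <= j < d.+1) (-1) ^+ j * 'C(d, j)%:R = (d == 0)%N%:R :> R.
Proof.
have := exprDn (1 : R) (-1) d; rewrite subrr expr0n => ->.
by rewrite big_mkord; apply: eq_bigr => i _; rewrite expr1n mul1r mulr_natr.
Qed.

Lemma indicator_coef_expands k : expands (indicator_coef k) (pred1 k).
Proof.
move=> X N XN; rewrite (big_cat_nat _ (n := X.+1)) //= [Y in _ + Y]big_nat_cond [Y in _ + Y]big1 ?addr0;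
  last by move=> a /andP[/andP[Xa _] _]; rewrite ffact_small // mulr0.
rewrite -/(psum _ X) /=; case: (leqP k X) => [kX | Xk]; last first.
  rewrite (ltn_eqF Xk) /psum big_nat_cond big1 // => a /andP[/andP[_ aX] _].
  by rewrite /indicator_coef /shiftr_seq ifF ?mul0r //; apply/negbTE; lia.
rewrite -(subnKC kX); move: (X - k)%N => d.
pose w j := 'C(k + d, k)%:R * ((-1) ^+ j * 'C(d, j)%:R) : R.
transitivity (psum (shiftr_seq k w) (k + d)).
  apply: eq_bigr => a _; rewrite /indicator_coef /shiftr_seq; case: leqP => ka; last by rewrite mul0r.
  rewrite /w -(subnKC ka) addKn ffactnD addKn -!bin_ffact !natrM.
  by field; rewrite !pnatr_eq0 -!lt0n !fact_gt0.
rewrite psum_shiftr psumZ /psum sum_sign_binomial; clear w.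
case: d => [|d]; first by rewrite addn0 binn !eqxx mulr1.
by rewrite mulr0 (_ : (k + d.+1 == k) = false) //; lia.
Qed.

Lemma unit_coef_expands : expands unit_coef predT.
Proof.
move=> X N _; rewrite big_ltn // /unit_coef eqxx mul1r ffactn0 big_nat_cond big1 ?addr0 //.
by move=> a /andP[/andP[a_gt0 _] _]; rewrite eqn0Ngt a_gt0 mul0r.
Qed.

Definition poisson_pmf (mu : R) k := mu ^+ k / k`!%:R * exp (- mu).

Lemma cvg_to_indicator_coef_series k x :
  cvg_to (psum (fun a => indicator_coef k a * x ^+ a)) (poisson_pmf x k).
Proof.
apply: eq_cvg_to (cvg_to_psum_shiftr k (cvg_to_psumZ (x ^+ k / k`!%:R) (cvg_to_exp (- x)))).
move=> n; apply: eq_bigr => a _; rewrite /indicator_coef /shiftr_seq.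
case: leqP => ka; last by rewrite mul0r.
rewrite -[in x ^+ a](subnKC ka) exprD (exprNn x) invfM.
by move: (k`!%:R) ((a - k)`!%:R) (x ^+ k) (x ^+ (a - k)) ((-1) ^+ (a - k)) => p q u v w; ring.
Qed.

Lemma cvg_to_indicator_coef_abs k :
  cvg_to (psum (fun a => `|indicator_coef k a|)) ((k`!%:R)^-1 * exp 1).
Proof.
apply: eq_cvg_to (cvg_to_psum_shiftr k (cvg_to_psumZ (k`!%:R)^-1 (cvg_to_exp 1))).
move=> n; apply: eq_bigr => a _; rewrite /indicator_coef /shiftr_seq.
case: leqP => ka; last by rewrite normr0.
by rewrite normrM normrX normrN1 !expr1n normfV normrM !normr_nat invfM mulr1 mul1r.
Qed.

Lemma cvg_to_unit_coef_series x : cvg_to (psum (fun b => unit_coef b * x ^+ b)) 1.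
Proof.
apply: eq_cvg_to (cvg_to_cst 1) => n; rewrite /psum big_ltn // /unit_coef eqxx mul1r expr0.
rewrite big_nat_cond big1 ?addr0 // => b /andP[/andP[b_gt0 _] _].
by rewrite eqn0Ngt b_gt0 mul0r.
Qed.

Lemma cvg_to_unit_coef_abs : cvg_to (psum (fun b => `|unit_coef b|)) 1.
Proof.
apply: eq_cvg_to (cvg_to_unit_coef_series 1) => n; apply: eq_bigr => b _.
by rewrite expr1n mulr1 /unit_coef normr_nat.
Qed.

Lemma card_event_fmoment n (phi psi : pred nat) (al be : nat -> R) :
  expands al phi -> expands be psi ->
  #|[set s in pm n.*2 | phi (Xstat s) && psi (Ystat s)]|%:R =
  \sum_(0 <= a < n.+1) al a * \sum_(0 <= b < n.+1) be b * (fmoment n a b)%:R.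
Proof.
move=> al_phi be_psi; rewrite -sum1_card natr_sum.
rewrite (eq_bigl (fun s => (s \in pm n.*2) && (phi (Xstat s) && psi (Ystat s)))) => [|s];
  last by rewrite inE.
transitivity (\sum_(s in pm n.*2) (phi (Xstat s))%:R * (psi (Ystat s))%:R : R).
  by rewrite big_mkcondr; apply: eq_bigr => s _; case: (phi _); case: (psi _); rewrite ?mulr0 ?mulr1.
transitivity (\sum_(s in pm n.*2) \sum_(0 <= a < n.+1) \sum_(0 <= b < n.+1)
    al a * be b * (Xstat s ^_ a * Ystat s ^_ b)%:R).
  apply: eq_bigr => s s_pm; have := Ystat_le s_pm; have := Xstat_le s_pm => Xn Yn.
  rewrite -(al_phi _ _ Xn) -(be_psi (Ystat s) n) ?mulr_suml; last lia.
  apply: eq_bigr => a _; rewrite mulr_sumr; apply: eq_bigr => b _.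
  by rewrite natrM mulrACA.
rewrite exchange_big; apply: eq_bigr => a _; rewrite exchange_big /= mulr_sumr.
apply: eq_bigr => b _; rewrite /fmoment natr_sum !mulr_sumr; apply: eq_bigr => s _.
by rewrite mulrA.
Qed.

Lemma prob_pm_expand n (phi psi : pred nat) (al be : nat -> R) :
  expands al phi -> expands be psi ->
  @prob_pm n (fun s => phi (Xstat s) && psi (Ystat s)) =
  psum (fun a => al a * psum (fun b => be b * fmoment_ratio n (a + b.*2)) n) n.
Proof.
move=> al_phi be_psi; rewrite /prob_pm RdivE !INRE (card_event_fmoment n al_phi be_psi).
rewrite card_pm /psum mulr_suml; apply: eq_bigr => a _; rewrite -mulrA mulr_suml.
by congr (_ * _); apply: eq_bigr => b _; rewrite -mulrA fmomentE.
Qed.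

Lemma cvg_to_moment_series (al be : nat -> R) (La Lb SA SB : R) :
  cvg_to (psum (fun a => `|al a|)) SA -> cvg_to (psum (fun b => `|be b|)) SB ->
  cvg_to (psum (fun a => al a * 2^-1 ^+ a)) La ->
  cvg_to (psum (fun b => be b * 4^-1 ^+ b)) Lb ->
  cvg_to (fun n => psum (fun a => al a * psum (fun b => be b * fmoment_ratio n (a + b.*2)) n) n)
    (La * Lb).
Proof.
move=> cA cB cLa cLb.
have ratio_le b m n : `|be b * fmoment_ratio n m| <= `|be b|.
  by rewrite normrM (ger0_norm (fmoment_ratio_ge0 _ _)) ler_piMr ?fmoment_ratio_le1.
have inner_le n a : `|psum (fun b => be b * fmoment_ratio n (a + b.*2)) n| <= SB.
  apply: le_trans (ler_norm_sum _ _ _) _; apply: le_trans (psum_le_lim _ cB n) => //.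
  by apply: ler_sum => b _; apply: ratio_le.
have cASB : cvg_to (psum (fun a => `|al a| * SB)) (SA * SB).
  by apply: eq_cvg_to (cvg_toM cA (cvg_to_cst SB)) => n; rewrite /psum mulr_suml.
apply: (tannery (v := fun a => al a * 2^-1 ^+ a * Lb) _ cASB) => [n a | a | ].
- by rewrite normrM ler_wpM2l ?inner_le.
- rewrite -mulrA; apply: cvg_toZ.
  apply: (tannery (v := fun b => 2^-1 ^+ a * (be b * 4^-1 ^+ b)) _ cB) => [n b | b | ].
  + exact: ratio_le.
  + have quarter : 2^-1 ^+ 2 = 4^-1 :> R by rewrite exprVn expr2 -natrM.
    rewrite mulrCA -quarter -exprM mul2n -exprD.
    exact: cvg_toZ (cvg_to_fmoment_ratio _).
  + exact: cvg_to_psumZ.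
- by apply: eq_cvg_to (cvg_toM cLa (cvg_to_cst Lb)) => n; rewrite /psum mulr_suml.
Qed.

Lemma cvg_to_prob_pm (phi psi : pred nat) (al be : nat -> R) (La Lb SA SB : R) :
  expands al phi -> expands be psi ->
  cvg_to (psum (fun a => `|al a|)) SA -> cvg_to (psum (fun b => `|be b|)) SB ->
  cvg_to (psum (fun a => al a * 2^-1 ^+ a)) La ->
  cvg_to (psum (fun b => be b * 4^-1 ^+ b)) Lb ->
  cvg_to (fun n => @prob_pm n (fun s => phi (Xstat s) && psi (Ystat s))) (La * Lb).
Proof.
move=> al_phi be_psi cA cB cLa cLb.
apply: eq_cvg_to (cvg_to_moment_series cA cB cLa cLb) => n.
by rewrite (prob_pm_expand n al_phi be_psi).
Qed.

Lemma eq_prob_pm n (P Q : pred {perm 'I_n.*2}) : P =1 Q -> prob_pm P = prob_pm Q.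
Proof.
move=> PQ; rewrite /prob_pm; have -> // : [set s in pm n.*2 | P s] = [set s in pm n.*2 | Q s].
by apply/setP => s; rewrite !inE PQ.
Qed.

Lemma cvg_to_prob_Xstat k :
  cvg_to (fun n => @prob_pm n (fun s => Xstat s == k)) (poisson_pmf 2^-1 k).
Proof.
rewrite -[poisson_pmf _ _]mulr1.
apply: eq_cvg_to (cvg_to_prob_pm (indicator_coef_expands k) unit_coef_expands
  (cvg_to_indicator_coef_abs k) cvg_to_unit_coef_abs
  (cvg_to_indicator_coef_series k _) (cvg_to_unit_coef_series _)) => n.
by apply: eq_prob_pm => s; rewrite andbT.
Qed.

Lemma cvg_to_prob_Ystat l :
  cvg_to (fun n => @prob_pm n (fun s => Ystat s == l)) (poisson_pmf 4^-1 l).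
Proof.
rewrite -[poisson_pmf _ _]mul1r.
exact: cvg_to_prob_pm unit_coef_expands (indicator_coef_expands l)
  cvg_to_unit_coef_abs (cvg_to_indicator_coef_abs l)
  (cvg_to_unit_coef_series _) (cvg_to_indicator_coef_series l _).
Qed.

Lemma cvg_to_prob_XYstat k l :
  cvg_to (fun n => @prob_pm n (fun s => (Xstat s == k) && (Ystat s == l)))
    (poisson_pmf 2^-1 k * poisson_pmf 4^-1 l).
Proof.
exact: cvg_to_prob_pm (indicator_coef_expands k) (indicator_coef_expands l)
  (cvg_to_indicator_coef_abs k) (cvg_to_indicator_coef_abs l)
  (cvg_to_indicator_coef_series k _) (cvg_to_indicator_coef_series l _).
Qed.

Lemma IZR_posE p : IZR (Zpos p) = (nat_of_pos p)%:R.
Proof. by rewrite IZRposE INRE. Qed.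

(* Restore Stdlib's reading of [%R], numerals and operators at type [R]. *)
Close Scope ring_scope.
Delimit Scope R_scope with R.
Bind Scope R_scope with R.
Local Open Scope R_scope.

Lemma poisson_pmfE (p : positive) k :
  poisson_pmf (/ IZR (Zpos p)) k = exp (-1 / IZR (Zpos p)) / (IZR (Zpos p) ^ k * INR (fact k)).
Proof.
have /RltP/lt0r_neq0 q_neq0 := IZR_lt 0 _ (Pos2Z.is_pos p).
rewrite /poisson_pmf !RdivE RmultE RpowE INRE factE RinvE (_ : IZR (Zneg 1) = Ropp 1) // RoppE mulN1r exprVn.
by field; rewrite expf_neq0 // pnatr_eq0 -lt0n fact_gt0.
Qed.

Lemma Un_cv_prob_Xstat k :
  Un_cv (fun n => @prob_pm n (fun s => Xstat s == k)) (exp (-1/2) / (2 ^ k * INR (fact k))).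
Proof. by rewrite -poisson_pmfE IZR_posE; apply/cvg_toE/cvg_to_prob_Xstat. Qed.

Lemma Un_cv_prob_Ystat l :
  Un_cv (fun n => @prob_pm n (fun s => Ystat s == l)) (exp (-1/4) / (4 ^ l * INR (fact l))).
Proof. by rewrite -poisson_pmfE IZR_posE; apply/cvg_toE/cvg_to_prob_Ystat. Qed.

Lemma exp_div_split a b x1 x2 y1 y2 :
  exp (a + b) / (x1 * x2 * y1 * y2) = exp a / (x1 * y1) * (exp b / (x2 * y2)).
Proof. by rewrite !RdivE !RmultE RplusE -expRD !invfM; ring. Qed.

Lemma Un_cv_prob_XYstat k l :
  Un_cv (fun n => @prob_pm n (fun s => (Xstat s == k) && (Ystat s == l)))
    (exp (-3/4) / (2 ^ k * 4 ^ l * INR (fact k) * INR (fact l))).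
Proof.
rewrite (_ : -3/4 = -1/2 + -1/4); last by Lra.lra.
by rewrite exp_div_split -!poisson_pmfE !IZR_posE; apply/cvg_toE/cvg_to_prob_XYstat.
Qed.

Theorem corollary5p2 : forall k l : nat,
  Un_cv (fun n => @prob_pm n (fun s => Xstat s == k))
        (exp (-1/2) / (2 ^ k * INR (fact k)))%R /\
  Un_cv (fun n => @prob_pm n (fun s => Ystat s == l))
        (exp (-1/4) / (4 ^ l * INR (fact l)))%R /\
  Un_cv (fun n => @prob_pm n (fun s => (Xstat s == k) && (Ystat s == l)))
        (exp (-3/4) / (2 ^ k * 4 ^ l * INR (fact k) * INR (fact l)))%R.
Proof.
move=> k l; split; first exact: Un_cv_prob_Xstat.
by split; [exact: Un_cv_prob_Ystat | exact: Un_cv_prob_XYstat].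
Qed.
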